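(* Let $\mathbf{L}$ be an integral implicative lattice with canonical frame $(X,\perp,Y,T)$. Then the map $a\mapsto X_a=\{x\in X: a\in x\}$ is an isomorphism of integral implicative lattices from $\mathbf L$ onto $\mathrm{KO}\mathcal{G}(X)$, the algebra of compact-open stable subsets of $X$ with operations $\cap$, the join of $\mathcal G(X)$, and $\Rightarrow$; in particular $X_a\Rightarrow X_b=X_{a\to b}$.
   Context: An integral implicative lattice is a bounded lattice with binary $\to$ satisfying (A1) $(a\vee b)\to c=(a\to c)\wedge(b\to c)$, (A2) $a\to(b\wedge c)=(a\to b)\wedge(a\to c)$, (A3) $a\le b$ iff $1\le a\to b$. The canonical frame of $\mathbf L$: $X$ is the set of filters of $\mathbf L$, $Y$ the set of ideals, $x\perp y$ iff $x\cap y\neq\emptyset$; for $x\in X,v\in Y$, $x\leadsto v$ is the ideal generated by $\{a\to b:a\in x,b\in v\}$, and $yTxv$ iff $x\leadsto v\subseteq y$. For $U\subseteq X$, $U'=\{y\in Y:\forall x\in U\ x\perp y\}$; for $V\subseteq Y$, ${}'V=\{x\in X:\forall y\in V\ x\perp y\}$; $A\subseteq X$ is stable if $A={}'(A')$, $B\subseteq Y$ co-stable if $B=({}'B)'$; $\mathcal G(X)$ is the complete lattice of stable sets (meet is intersection, join of $A,C$ is ${}'((A\cup C)')$). For $A\in\mathcal G(X)$ and co-stable $B$: $A\blacktriangleright B=(\{y:\exists x\in A\,\exists v\in B\ yTxv\})''$ and for $A,C\in\mathcal G(X)$: $A\Rightarrow C={}'(A\blacktriangleright C')$. $X$ carries the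 (spectral) topology generated by the basis $\{X_a:a\in L\}$; $\mathrm{KO}\mathcal G(X)$ is the set of stable sets that are compact and open in this topology. *)

From Stdlib Require List.
From HB Require Import structures.
From mathcomp Require Import all_boot all_order.
Set Implicit Arguments. Unset Strict Implicit. Unset Printing Implicit Defensive.
Import Order.LTheory.
Local Open Scope order_scope.

Section CanonicalFrame.
Context {disp : Order.disp_t} {L : tbLatticeType disp} (imp : L -> L -> L).

Definition integral_implicative : Prop :=
  (forall a b c : L, imp (a `|` b) c = imp a c `&` imp b c) /\
  (forall a b c : L, imp a (b `&` c) = imp a b `&` imp a c) /\
  (forall a b : L, a <= b <-> \top <= imp a b).

Definition is_filter (x : L -> Prop) : Prop :=
  (exists a, x a) /\ (forall a b, x a -> a <= b -> x b) /\
  (forall a b, x a -> x b -> x (a `&` b)).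

Definition is_ideal (y : L -> Prop) : Prop :=
  (exists a, y a) /\ (forall a b, y b -> a <= b -> y a) /\
  (forall a b, y a -> y b -> y (a `|` b)).

(* X = set of filters, Y = set of ideals *)
Definition filt := {x : L -> Prop | is_filter x}.
Definition idl := {y : L -> Prop | is_ideal y}.

Definition perp (x : filt) (y : idl) : Prop :=
  exists a, proj1_sig x a /\ proj1_sig y a.

Definition rpol (U : filt -> Prop) : idl -> Prop :=
  fun y => forall x, U x -> perp x y.
Definition lpol (V : idl -> Prop) : filt -> Prop :=
  fun x => forall y, V y -> perp x y.

Definition stable (A : filt -> Prop) : Prop := A = lpol (rpol A).
Definition costable (B : idl -> Prop) : Prop := B = rpol (lpol B).

Definition Gjoin (A C : filt -> Prop) : filt -> Prop :=
  lpol (rpol (fun x => A x \/ C x)).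
Definition Gbot : filt -> Prop := lpol (rpol (fun _ => False)).

Definition gen_ideal (S : L -> Prop) : L -> Prop :=
  fun c => forall y : idl, (forall s, S s -> proj1_sig y s) -> proj1_sig y c.

Definition leadsto (x : filt) (v : idl) : L -> Prop :=
  gen_ideal (fun c => exists a b, proj1_sig x a /\ proj1_sig v b /\ c = imp a b).

Definition Trel (y : idl) (x : filt) (v : idl) : Prop :=
  forall c, leadsto x v c -> proj1_sig y c.

Definition blacktri (A : filt -> Prop) (B : idl -> Prop) : idl -> Prop :=
  rpol (lpol (fun y => exists x v, A x /\ B v /\ Trel y x v)).

Definition Gimp (A C : filt -> Prop) : filt -> Prop :=
  lpol (blacktri A (rpol C)).

Definition Xa (a : L) : filt -> Prop := fun x => proj1_sig x a.

Definition sp_open (U : filt -> Prop) : Prop :=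
  forall x, U x -> exists a, Xa a x /\ (forall z, Xa a z -> U z).

Definition sp_compact (K : filt -> Prop) : Prop :=
  forall C : (filt -> Prop) -> Prop,
    (forall U, C U -> sp_open U) ->
    (forall x, K x -> exists U, C U /\ U x) ->
    exists s : seq (filt -> Prop),
      (forall U, List.In U s -> C U) /\
      (forall x, K x -> exists U, List.In U s /\ U x).

Definition KOG (A : filt -> Prop) : Prop :=
  stable A /\ sp_compact A /\ sp_open A.

End CanonicalFrame.

(* The basic sets X_a and Y_a = {y | a in y} are each other's polars, as the
   principal filter and principal ideal of a show.  Hence X_a is stable, and
   the polar of a finite union of X_c's is Y_d for the join d of the c's;
   this gives the join and bottom of G(X) and, since a compact-open set is a
   finite union of basic sets, surjectivity onto KO G(X).  For implication,
   the principal ideal of a -> b is T-related to the principal filter of a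
   and the principal ideal of b, because -> is antitone in its first and
   monotone in its second argument.  Every other y with y T x v, x in X_a
   and v in (X_b)' contains a -> b, so the left polar of the set of such y
   is X_{a->b}. *)
From mathcomp Require Import all_boot all_order.
From Stdlib Require Import FunctionalExtensionality PropExtensionality.
From Stdlib Require List.
Import Order.LTheory.
Local Open Scope order_scope.

Lemma pred_ext (T : Type) (P Q : T -> Prop) : (forall x, P x <-> Q x) -> P = Q.
Proof.
move=> PQ; apply: functional_extensionality => x.
exact: propositional_extensionality.
Qed.

Section Polarity.
Context {disp : Order.disp_t} {L : tbLatticeType disp}.
Local Notation filter := (@filt disp L).
Local Notation ideal := (@idl disp L).

Definition Ya (a : L) : ideal -> Prop := fun y => proj1_sig y a.

Lemma filt_up (x : filter) a b : Xa a x -> a <= b -> Xa b x.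
Proof. by case: (proj2_sig x) => [_ [up _]]; exact: up. Qed.

Lemma filt_meet (x : filter) a b : Xa a x -> Xa b x -> Xa (a `&` b) x.
Proof. by case: (proj2_sig x) => [_ [_ meet]]; exact: meet. Qed.

Lemma filt_top (x : filter) : Xa \top x.
Proof. by case: (proj2_sig x) => [[a xa] [up _]]; exact: up xa (lex1 a). Qed.

Lemma idl_down (y : ideal) a b : Ya b y -> a <= b -> Ya a y.
Proof. by case: (proj2_sig y) => [_ [down _]]; exact: down. Qed.

Lemma idl_join (y : ideal) a b : Ya a y -> Ya b y -> Ya (a `|` b) y.
Proof. by case: (proj2_sig y) => [_ [_ join]]; exact: join. Qed.

Lemma idl_bot (y : ideal) : Ya \bot y.
Proof. by case: (proj2_sig y) => [[a ya] [down _]]; exact: down ya (le0x a). Qed.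

Lemma principal_filter_is_filter (a : L) : is_filter (fun c => a <= c).
Proof.
split; first by exists a.
split; first by move=> c d; exact: le_trans.
by move=> c d ac ad; rewrite lexI ac ad.
Qed.

Lemma principal_ideal_is_ideal (a : L) : is_ideal (fun c => c <= a).
Proof.
split; first by exists a.
split; first by move=> c d da cd; exact: le_trans cd da.
by move=> c d ca da; rewrite leUx ca da.
Qed.

Definition pfilt (a : L) : filter := exist _ _ (principal_filter_is_filter a).
Definition pidl (a : L) : ideal := exist _ _ (principal_ideal_is_ideal a).

Lemma rpol_Xa (a : L) : rpol (Xa a) = Ya a.
Proof.
apply: pred_ext => y; split=> [polar | ya x xa]; last by exists a.
by case: (polar (pfilt a) (le_refl a)) => c [/= ac yc]; exact: idl_down yc ac.
Qed.

Lemma lpol_Ya (a : L) : lpol (Ya a) = Xa a.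
Proof.
apply: pred_ext => x; split=> [polar | xa y ya]; last by exists a.
by case: (polar (pidl a) (le_refl a)) => c [xc /= ca]; exact: filt_up xc ca.
Qed.

Lemma Xa_stable (a : L) : stable (Xa a).
Proof. by rewrite /stable rpol_Xa lpol_Ya. Qed.

Lemma rpolU (P Q : filter -> Prop) :
  rpol (fun x => P x \/ Q x) = (fun y => rpol P y /\ rpol Q y).
Proof.
apply: pred_ext => y; split=> [polar | [pP pQ] x [/pP | /pQ] //].
by split=> x ?; apply: polar; [left | right].
Qed.

Lemma rpol0 : rpol (fun _ : filter => False) = (fun _ => True).
Proof. by apply: pred_ext => y; split=> // _ x []. Qed.

Lemma lpol_rpol_lpol (V : ideal -> Prop) : lpol (rpol (lpol V)) = lpol V.
Proof.
apply: pred_ext => x; split=> [polar y Vy | Vx y polar]; last exact: polar.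
by apply: polar => z; apply.
Qed.

Lemma YaU (a b : L) : Ya (a `|` b) = (fun y : ideal => Ya a y /\ Ya b y).
Proof.
apply: pred_ext => y; split=> [yab | [ya yb]]; last exact: idl_join.
by split; apply: idl_down yab _; [exact: leUl | exact: leUr].
Qed.

Lemma Ya_bot : Ya \bot = (fun _ : ideal => True).
Proof. by apply: pred_ext => y; split=> // _; exact: idl_bot. Qed.

Lemma rpol_bigcup_Xa (cs : seq L) :
  rpol (fun x => exists c, List.In c cs /\ Xa c x) = Ya (\join_(c <- cs) c).
Proof.
elim: cs => [|c0 cs IH].
  rewrite big_nil Ya_bot -rpol0; congr rpol.
  by apply: pred_ext => x; split=> [[c [[]]] | []].
have -> : (fun x => exists c, List.In c (c0 :: cs) /\ Xa c x) =
          (fun x => Xa c0 x \/ exists c, List.In c cs /\ Xa c x).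
  apply: pred_ext => x; split=> [[c [[<- | cs_c] xc]] | [x0 | [c [cs_c xc]]]].
  - by left.
  - by right; exists c.
  - by exists c0; split=> //; left.
  - by exists c; split=> //; right.
by rewrite rpolU rpol_Xa IH big_cons YaU.
Qed.

Lemma Xa_top : Xa \top = (fun _ : filter => True).
Proof. by apply: pred_ext => x; split=> // _; exact: filt_top. Qed.

Lemma Xa_bot : Xa \bot = Gbot (L := L).
Proof. by rewrite /Gbot rpol0 -Ya_bot lpol_Ya. Qed.

Lemma XaI (a b : L) : Xa (a `&` b) = (fun x : filter => Xa a x /\ Xa b x).
Proof.
apply: pred_ext => x; split=> [xab | [xa xb]]; last exact: filt_meet.
by split; apply: filt_up xab _; [exact: leIl | exact: leIr].
Qed.

Lemma XaU (a b : L) : Xa (a `|` b) = Gjoin (Xa a) (Xa b).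
Proof. by rewrite /Gjoin rpolU !rpol_Xa -YaU lpol_Ya. Qed.

Lemma Xa_inj (a b : L) : Xa a = Xa b -> a = b.
Proof.
move=> eq_ab; apply: le_anti; apply/andP; split.
- by have : Xa a (pfilt a) := le_refl a; rewrite eq_ab.
- by have : Xa b (pfilt b) := le_refl b; rewrite -eq_ab.
Qed.

Lemma Xa_open (a : L) : sp_open (Xa a).
Proof. by move=> x xa; exists a. Qed.

Lemma Xa_compact (a : L) : sp_compact (Xa a).
Proof.
move=> C C_open covered.
case: (covered (pfilt a) (le_refl a)) => U [CU Ua].
case: (C_open U CU _ Ua) => c [/= ac XcU].
exists [:: U]; split=> [V [<- | []] // | x xa].
by exists U; split; [left | apply: XcU; exact: filt_up xa ac].
Qed.

Lemma KOG_Xa (a : L) : KOG (Xa a).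
Proof. by split; [exact: Xa_stable | split; [exact: Xa_compact | exact: Xa_open]]. Qed.

Lemma bigcup_basic_seq (s : seq (filter -> Prop)) :
  (forall U, List.In U s -> exists c, U = Xa c) ->
  exists cs : seq L, forall x,
    (exists U, List.In U s /\ U x) <-> (exists c, List.In c cs /\ Xa c x).
Proof.
elim: s => [|U s IH] basic.
  by exists [::] => x; split=> -[? [[]]].
case: (basic U (or_introl erefl)) => c0 ->.
case: IH => [V sV | cs cs_eq]; first by apply: basic; right.
exists (c0 :: cs) => x; split.
- move=> [V [[<- | sV] Vx]]; first by exists c0; split=> //; left.
  have [c [cs_c xc]] : exists c, List.In c cs /\ Xa c x by apply/cs_eq; exists V.
  by exists c; split=> //; right.
- move=> [c [[<- | cs_c] xc]]; first by exists (Xa c0); split=> //; left.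
  have [V [sV Vx]] : exists V, List.In V s /\ V x by apply/cs_eq; exists c.
  by exists V; split=> //; right.
Qed.

Lemma compact_open_bigcup (A : filter -> Prop) :
  sp_open A -> sp_compact A ->
  exists cs : seq L, A = (fun x => exists c, List.In c cs /\ Xa c x).
Proof.
move=> A_open A_compact.
pose C U := exists c, U = Xa c /\ (forall z, Xa c z -> A z).
case: (A_compact C) => [U [c [-> _]] | x Ax | s [sC s_covers]].
- exact: Xa_open.
- case: (A_open x Ax) => c [xc XcA].
  by exists (Xa c); split=> //; exists c.
case: (bigcup_basic_seq s) => [U /sC [c [-> _]] | cs cs_eq]; first by exists c.
exists cs; apply: pred_ext => x; rewrite -cs_eq.
split=> [/s_covers // | [U [sU Ux]]].
by case: (sC U sU) => c [eqU XcA]; rewrite eqU in Ux; exact: XcA.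
Qed.

Lemma KOG_basic (A : filter -> Prop) : KOG A -> exists a : L, A = Xa a.
Proof.
move=> [A_stable [A_compact A_open]].
case: (compact_open_bigcup _ A_open A_compact) => cs A_eq.
exists (\join_(c <- cs) c).
by rewrite A_stable A_eq rpol_bigcup_Xa lpol_Ya.
Qed.

Section Implication.
Variable imp : L -> L -> L.
Hypothesis imp_joinl : forall a b c, imp (a `|` b) c = imp a c `&` imp b c.
Hypothesis imp_meetr : forall a b c, imp a (b `&` c) = imp a b `&` imp a c.

Lemma imp_antitone a a' c : a <= a' -> imp a' c <= imp a c.
Proof. by move=> aa'; rewrite -(join_r aa') imp_joinl leIl. Qed.

Lemma imp_monotone a c c' : c <= c' -> imp a c <= imp a c'.
Proof. by move=> cc'; rewrite -(meet_l cc') imp_meetr leIr. Qed.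

Lemma leadsto_imp (x : filter) (v : ideal) a b :
  Xa a x -> Ya b v -> leadsto imp x v (imp a b).
Proof. by move=> xa vb y gen; apply: gen; exists a, b. Qed.

Lemma Trel_principal (a b : L) : Trel imp (pidl (imp a b)) (pfilt a) (pidl b).
Proof.
move=> c gen; apply: (gen (pidl (imp a b))) => _ [a' [b' [/= aa' [b'b ->]]]].
exact: le_trans (imp_antitone _ _ _ aa') (imp_monotone _ _ _ b'b).
Qed.

Lemma Gimp_Xa (a b : L) : Gimp imp (Xa a) (Xa b) = Xa (imp a b).
Proof.
rewrite /Gimp /blacktri lpol_rpol_lpol rpol_Xa.
apply: pred_ext => x; split=> [polar | x_ab y [x' [v [x'a [vb T_y]]]]].
- have T_image :
      exists x' v, Xa a x' /\ Ya b v /\ Trel imp (pidl (imp a b)) x' v.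
    exists (pfilt a), (pidl b).
    by split; [exact: le_refl | split; [exact: le_refl | exact: Trel_principal]].
  by case: (polar _ T_image) => c [xc /= c_ab]; exact: filt_up xc c_ab.
- by exists (imp a b); split=> //; apply: T_y; exact: leadsto_imp.
Qed.

End Implication.
End Polarity.

Theorem proposition4p3 (disp : Order.disp_t) (L : tbLatticeType disp)
  (imp : L -> L -> L) (HL : integral_implicative imp) :
  (* a |-> X_a lands in KO G(X) and is onto KO G(X) *)
  (forall a : L, KOG (Xa a)) /\
  (forall A : @filt disp L -> Prop, KOG A -> exists a : L, A = Xa a) /\
  (* injective *)
  (forall a b : L, Xa a = Xa b -> a = b) /\
  (* preserves bounds, meet, join and implication *)
  Xa (\top : L) = (fun _ => True) /\
  Xa (\bot : L) = Gbot (L := L) /\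
  (forall a b : L, Xa (a `&` b) = (fun x => Xa a x /\ Xa b x)) /\
  (forall a b : L, Xa (a `|` b) = Gjoin (Xa a) (Xa b)) /\
  (forall a b : L, Xa (imp a b) = Gimp imp (Xa a) (Xa b)).
Proof.
case: HL => imp_joinl [imp_meetr _].
split; first exact: KOG_Xa.
split; first exact: KOG_basic.
split; first exact: Xa_inj.
split; first exact: Xa_top.
split; first exact: Xa_bot.
split; first exact: XaI.
split; first exact: XaU.
by move=> a b; rewrite Gimp_Xa.
Qed.
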